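(* Let $\mathcal C\subseteq 2^{[n]}$ be an inductively pierced code, and suppose $G(\mathcal C)$ contains a clique of size $k+1$. Then $\mathcal C$ does not have a well-formed realization by open balls in $\mathbb R^{k-1}$.
   Context: A code is a set $\mathcal C\subseteq 2^{[n]}$, $[n]=\{1,\dots,n\}$. Standing conventions: $\emptyset\in\mathcal C$; every neuron lies in some codeword; no two distinct neurons lie in exactly the same codewords. $\mathcal C\setminus i$ is obtained by removing $i$ from every codeword. For $\alpha\subseteq\beta$, $[\alpha,\beta]=\{\gamma:\alpha\subseteq\gamma\subseteq\beta\}$, of rank $|\beta\setminus\alpha|$. A neuron $i$ is a $k$-piercing of $\mathcal C$ if there are $\sigma\subseteq\tau\subseteq[n]\setminus\{i\}$ with $[\sigma,\tau]$ of rank $k$, $[\sigma,\tau]\subseteq\mathcal C\setminus i$, and $\mathcal C=(\mathcal C\setminus i)\cup[\sigma\cup\{i\},\tau\cup\{i\}]$. A code is $k$-inductively pierced if $\mathcal C=\{\emptyset\}$, or some neuron $i$ is a $k'$-piercing for some $k'\le k$ and $\mathcal C\setminus i$ is $k$-inductively pierced; inductively pierced means $k$-inductively pierced for some $k$. A pseudo-monomial is $\prod_{a\in\alpha}x_a\prod_{b\in\beta}(1-x_b)\in\mathbb F_2[x_1,\dots,x_n]$ with $\alpha\cap\beta=\emptyset$, ordered by divisibility; $J_\mathcal C=\langle\rho_\gamma:\gamma\notin\mathcal C\rangle$ with $\rho_\gamma=\prod_{a\in\gamma}x_a\prod_{b\notin\gamma}(1-x_b)$, and $\mathrm{CF}(J_\mathcal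 C)$ is its set of minimal pseudo-monomials (for inductively pierced codes all have degree two). $G(\mathcal C)$ is the graph on $[n]$ with edge $ab$ whenever $\mathrm{CF}(J_\mathcal C)$ contains no pseudo-monomial in the variables $x_a,x_b$. Sets $U_1,\dots,U_n\subseteq\mathbb R^d$ realize $\mathcal C$ if $\mathcal C=\{\gamma:\bigcap_{i\in\gamma}U_i\setminus\bigcup_{j\notin\gamma}U_j\ne\emptyset\}$. A collection of $(d-1)$-spheres in $\mathbb R^d$ is well-formed if for every $m\le d$ the intersection of any $m$ of them is empty or a $(d-m)$-dimensional sphere, and the intersection of any $d+1$ of them is empty; open balls are well-formed if their boundary spheres are. *)

From HB Require Import structures.
From mathcomp Require Import all_boot all_algebra.
From mathcomp Require Import mpoly.
From mathcomp Require Import reals.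
Set Implicit Arguments. Unset Strict Implicit. Unset Printing Implicit Defensive.
Import GRing.Theory Num.Theory.

Definition code (n : nat) := {set {set 'I_n}}.

Definition standing_conventions (n : nat) (C : code n) : Prop :=
  [/\ set0 \in C,
      (forall i : 'I_n, exists2 g, g \in C & i \in g)
    & (forall i j : 'I_n, (forall g, g \in C -> (i \in g) = (j \in g)) -> i = j)].

(* C \ i : remove neuron i from every codeword.  (We keep the ambient index
   type 'I_n; neuron i simply no longer occurs.) *)
Definition code_del (n : nat) (C : code n) (i : 'I_n) : code n :=
  [set g :\ i | g in C].

Definition interval (n : nat) (s t : {set 'I_n}) : code n :=
  [set g : {set 'I_n} | (s \subset g) && (g \subset t)].

Definition piercing (n : nat) (C : code n) (i : 'I_n) (k : nat) : Prop :=
  exists s t : {set 'I_n},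
    [/\ s \subset t, i \notin t, #|t :\: s| = k,
        interval s t \subset code_del C i
      & C = code_del C i :|: interval (i |: s) (i |: t)].

Inductive k_ind_pierced (n : nat) (k : nat) : code n -> Prop :=
  | kip_triv : k_ind_pierced k [set set0]
  | kip_step (C : code n) (i : 'I_n) (k' : nat) :
      (k' <= k)%N -> piercing C i k' -> k_ind_pierced k (code_del C i) ->
      k_ind_pierced k C.

Definition ind_pierced (n : nat) (C : code n) : Prop :=
  exists k, k_ind_pierced k C.

Local Open Scope ring_scope.

Definition pmono (n : nat) (al be : {set 'I_n}) : {mpoly 'F_2[n]} :=
  (\prod_(a in al) 'X_a) * \prod_(b in be) (1 - 'X_b).

Definition is_pseudo_monomial (n : nat) (f : {mpoly 'F_2[n]}) : Prop :=
  exists al be : {set 'I_n}, [disjoint al & be] /\ f = pmono al be.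

Definition rho (n : nat) (g : {set 'I_n}) : {mpoly 'F_2[n]} := pmono g (~: g).

Definition in_neural_ideal (n : nat) (C : code n) (f : {mpoly 'F_2[n]}) : Prop :=
  exists h : {set 'I_n} -> {mpoly 'F_2[n]},
    f = \sum_(g : {set 'I_n} | g \notin C) h g * rho g.

Definition mdvd (n : nat) (f g : {mpoly 'F_2[n]}) : Prop :=
  exists h : {mpoly 'F_2[n]}, g = h * f.

Definition in_CF (n : nat) (C : code n) (f : {mpoly 'F_2[n]}) : Prop :=
  [/\ is_pseudo_monomial f, in_neural_ideal C f
    & forall g, is_pseudo_monomial g -> in_neural_ideal C g -> mdvd g f ->
        g = f].

Definition G_edge (n : nat) (C : code n) (a b : 'I_n) : Prop :=
  a <> b /\
  ~ exists al be : {set 'I_n},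
      [/\ [disjoint al & be], al :|: be = [set a; b] & in_CF C (pmono al be)].

Definition G_clique (n : nat) (C : code n) (K : {set 'I_n}) : Prop :=
  forall a b, a \in K -> b \in K -> a <> b -> G_edge C a b.

Definition sqdist (R : realType) (d : nat) (x y : 'rV[R]_d) : R :=
  \sum_(i < d) (x 0 i - y 0 i) ^+ 2.

Definition is_sphere (R : realType) (d j : nat) (S : 'rV[R]_d -> Prop) : Prop :=
  exists (c : 'rV[R]_d) (r : R) (V : 'M[R]_d),
    [/\ 0 < r, \rank V = j.+1
      & forall x, S x <-> ((x - c) <= V)%MS /\ sqdist x c = r ^+ 2].

Definition sphere_inter (R : realType) (d n : nat) (c : 'I_n -> 'rV[R]_d)
  (r : 'I_n -> R) (S : {set 'I_n}) : 'rV[R]_d -> Prop :=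
  fun x => forall i, i \in S -> sqdist x (c i) = r i ^+ 2.

Definition well_formed_balls (R : realType) (d n : nat) (c : 'I_n -> 'rV[R]_d)
  (r : 'I_n -> R) : Prop :=
  (forall S : {set 'I_n}, (1 <= #|S|)%N -> (#|S| <= d)%N ->
     (forall x, ~ sphere_inter c r S x) \/ is_sphere (d - #|S|) (sphere_inter c r S))
  /\ (forall S : {set 'I_n}, #|S| = d.+1 -> forall x, ~ sphere_inter c r S x).

Definition balls_realize (R : realType) (d n : nat) (C : code n)
  (c : 'I_n -> 'rV[R]_d) (r : 'I_n -> R) : Prop :=
  forall g : {set 'I_n},
    g \in C <->
    exists x : 'rV[R]_d,
      (forall i, i \in g -> sqdist x (c i) < r i ^+ 2) /\
      (forall j, j \notin g -> ~ (sqdist x (c j) < r j ^+ 2)).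

Definition has_wf_ball_realization (R : realType) (d n : nat) (C : code n) : Prop :=
  exists (c : 'I_n -> 'rV[R]_d) (r : 'I_n -> R),
    [/\ forall i, 0 < r i, balls_realize C c r & well_formed_balls c r].

(** If i, j span an edge of G(C), none of the four pseudo-monomials in x_i, x_j lies
    in CF(J_C), and since all their proper divisors are nonzero on C, none of them
    vanishes on C: every pattern on {i, j} occurs among the codewords.  In an
    inductively pierced code this pairwise condition propagates along the piercings,
    so a clique K of G(C) is shattered: every subset of K is the trace on K of a
    codeword.  But k+1 balls B(c_j, r_j) in R^(k-1) cannot realize all 2^(k+1)
    patterns: the lifted centres (1, c_j) in R^k admit an affine dependence
    sum_j w_j (1, c_j) = 0 with w <> 0, which makes sum_j w_j (|x - c_j|^2 - r_j^2)
    independent of x, whereas the patterns {j | w_j > 0} and {j | w_j < 0} force this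
    sum to be negative and positive respectively. *)

From Pilot Require Import Defs.
From HB Require Import structures.
From mathcomp Require Import all_boot all_order all_algebra.
From mathcomp Require Import mpoly.
From mathcomp Require Import reals.

Set Implicit Arguments.
Unset Strict Implicit.
Unset Printing Implicit Defensive.
Import Order.TTheory GRing.Theory Num.Theory.

Lemma setU_subset_eq (T : finType) (A B A' B' : {set T}) : [disjoint A & B] ->
  A' \subset A -> B' \subset B -> A' :|: B' = A :|: B -> A' = A /\ B' = B.
Proof.
move=> dAB sA sB eqU; split; apply/eqP; rewrite eqEsubset ?sA ?sB /=; apply/subsetP => x x_in.
  have : x \in A' :|: B' by rewrite eqU inE x_in.
  by rewrite inE => /orP[// | /(subsetP sB)]; rewrite (disjointFr dAB x_in).
have : x \in A' :|: B' by rewrite eqU inE x_in orbT.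
by rewrite inE => /orP[/(subsetP sA) | //]; rewrite (disjointFl dAB x_in).
Qed.

Section NeuralIdeal.
Local Open Scope ring_scope.
Variable n : nat.
Implicit Types (C : code n) (al be v z : {set 'I_n}).

Definition indic z : 'I_n -> 'F_2 := fun j => (j \in z)%:R.

Lemma prod_natb (A : {set 'I_n}) (P : pred 'I_n) :
  \prod_(i in A) ((P i)%:R : 'F_2) = [forall i in A, P i]%:R.
Proof.
rewrite -natr_prod; congr (_ %:R).
have [allP | /forall_inPn[i iA /negbTE Pi]] := boolP [forall i in A, P i].
  by rewrite big1 // => i /(forall_inP allP) ->.
by rewrite (bigD1 i) //= Pi.
Qed.

Lemma meval_pmono al be z :
  meval (indic z) (pmono al be) = ((al \subset z) && [disjoint be & z])%:R.
Proof.
rewrite /pmono mevalM !rmorph_prod /=.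
under eq_bigr do rewrite mevalXU.
have negE i : 1 - (i \in z)%:R = (i \notin z)%:R :> 'F_2.
  by case: (i \in z); rewrite ?subr0 ?subrr.
under [X in _ * X]eq_bigr do rewrite mevalB meval1 mevalXU negE.
rewrite !prod_natb -natrM mulnb; congr ((nat_of_bool _)%:R); congr andb.
  exact/forall_inP/subsetP.
by rewrite disjoints_subset; apply/forall_inP/subsetP => H i /H; rewrite inE.
Qed.

Lemma neural_ideal_vanish C f c : in_neural_ideal C f -> c \in C -> meval (indic c) f = 0.
Proof.
move=> [h ->] cC; rewrite raddf_sum big1 // => g gC /=.
rewrite mevalM meval_pmono disjoint_sym disjoints_subset setCK -eqEsubset.
by case: eqP => [gc | _]; [rewrite -gc (negbTE gC) in cC | rewrite mulr0].
Qed.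

Lemma mdvd_pmono_sub al be al' be' : [disjoint al & be] ->
  mdvd (pmono al' be') (pmono al be) -> al' \subset al /\ be' \subset be.
Proof.
move=> dab [h E].
have natb1 (x : 'F_2) (b : bool) : 1 = x * b%:R -> b.
  by case: b; rewrite ?mulr0 // => /eqP; rewrite oner_eq0.
have at_point z : (al \subset z) && [disjoint be & z] ->
    (al' \subset z) && [disjoint be' & z].
  move=> pat; apply: (natb1 (meval (indic z) h)).
  by rewrite -meval_pmono -mevalM -E meval_pmono pat.
have /andP[-> _] : (al' \subset al) && [disjoint be' & al].
  by apply: at_point; rewrite subxx disjoint_sym.
have /andP[_] : (al' \subset ~: be) && [disjoint be' & ~: be].
  by apply: at_point; rewrite -disjoints_subset dab disjoints_subset setCK subxx.
by rewrite disjoints_subset setCK.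
Qed.

Lemma pmono_prodE al be : [disjoint al & be] ->
  pmono al be = \prod_i (if i \in al then 'X_i else if i \in be then 1 - 'X_i else 1).
Proof.
move=> dab; rewrite /pmono big_mkcond [X in _ * X]big_mkcond -big_split /=.
apply: eq_bigr => i _.
case: ifP => ial; first by rewrite (disjointFr dab ial) mulr1.
by case: ifP; rewrite mul1r.
Qed.

Lemma rho_prodE v : rho v = \prod_i (if i \in v then 'X_i else 1 - 'X_i).
Proof.
rewrite /rho pmono_prodE; last by rewrite disjoints_subset setCK.
by apply: eq_bigr => i _; rewrite inE; case: (i \in v).
Qed.

Lemma pmono_sum_rho al be : [disjoint al & be] ->
  pmono al be = \sum_(v : {set 'I_n} | (al \subset v) && [disjoint be & v]) rho v.
Proof.
move=> dab.
(* Expand each factor [1 = 'X_i + (1 - 'X_i)] for [i] outside [al :|: be]. *)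
pose F i : {mpoly 'F_2[n]} := if i \in be then 0 else 'X_i.
pose G i : {mpoly 'F_2[n]} := if i \in al then 0 else 1 - 'X_i.
have -> : pmono al be = \prod_i (F i + G i).
  rewrite pmono_prodE //; apply: eq_bigr => i _; rewrite /F /G.
  case: ifP => ial; first by rewrite (disjointFr dab ial) addr0.
  by case: ifP => _; rewrite ?add0r // addrC subrK.
rewrite bigA_distr [RHS]big_mkcond /=; apply: eq_bigr => v _.
case: ifPn => [/andP[alv bev] | ].
  rewrite rho_prodE; apply: eq_bigr => i _; rewrite /F /G.
  case: ifP => iv; first by rewrite (disjointFl bev iv).
  by case: ifP => // ial; rewrite (subsetP alv _ ial) in iv.
rewrite negb_and -setI_eq0 => /orP[/subsetPn[i ial iv] | /set0Pn[i]].
  by rewrite (bigD1 i) //= (negbTE iv) /G ial mul0r.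
by rewrite inE => /andP[ibe iv]; rewrite (bigD1 i) //= iv /F ibe mul0r.
Qed.

Definition occurs C al be : bool :=
  [exists g in C, (al \subset g) && [disjoint be & g]].

Lemma pmono_in_neural_ideal C al be : [disjoint al & be] -> ~~ occurs C al be ->
  in_neural_ideal C (pmono al be).
Proof.
move=> dab nocc; exists (fun v => ((al \subset v) && [disjoint be & v])%:R).
rewrite pmono_sum_rho // big_mkcond [RHS]big_mkcond; apply: eq_bigr => v _.
case: ifP => [pat | _]; last by case: ifP; rewrite // mul0r.
have vC : v \notin C by apply: contra nocc => vC; apply/exists_inP; exists v.
by rewrite vC mul1r.
Qed.

Lemma neural_ideal_not_occurs C al be :
  in_neural_ideal C (pmono al be) -> ~~ occurs C al be.
Proof.
move=> J; apply/exists_inP => -[c cC pat].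
by have /eqP := neural_ideal_vanish J cC; rewrite meval_pmono pat oner_eq0.
Qed.

Lemma pmono_in_CF C al be :
  [disjoint al & be] -> ~~ occurs C al be ->
  (forall al' be' : {set 'I_n}, al' \subset al -> be' \subset be ->
     al' :|: be' \proper al :|: be -> occurs C al' be') ->
  in_CF C (pmono al be).
Proof.
move=> dab nocc sub_occ; split; [by exists al, be | exact: pmono_in_neural_ideal |].
move=> _ [al' [be' [_ ->]]] J' /(mdvd_pmono_sub dab)[sal sbe].
have [prop | nprop] := boolP (al' :|: be' \proper al :|: be).
  by have := sub_occ _ _ sal sbe prop; rewrite (negbTE (neural_ideal_not_occurs J')).
have /eqP eqU : al' :|: be' == al :|: be by rewrite eqEproper setUSS.
by have [-> ->] := setU_subset_eq dab sal sbe eqU.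
Qed.

End NeuralIdeal.

Section Shattering.
Variable n : nat.
Implicit Types (C : code n) (K P al be : {set 'I_n}).

(* Every [P \subset K] is the trace [g :&: K] of a codeword [g]. *)
Definition shatters C K : Prop := forall P, P \subset K -> occurs C P (K :\: P).

Lemma occurs0 C be : set0 \in C -> occurs C set0 be.
Proof.
by move=> C0; apply/exists_inP; exists set0; rewrite // sub0set disjoints_subset setC0 subsetT.
Qed.

Lemma shatters0 C : set0 \in C -> shatters C set0.
Proof. by move=> C0 P; rewrite subset0 => /eqP ->; exact: occurs0. Qed.

Lemma shattersS C C' K : C \subset C' -> shatters C K -> shatters C' K.
Proof.
move=> sCC' sh P PK; have /exists_inP[g gC pat] := sh P PK.
by apply/exists_inP; exists g; first exact: (subsetP sCC').
Qed.

Lemma shatters_le1 C K : standing_conventions C -> #|K| <= 1 -> shatters C K.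
Proof.
move=> [C0 cover _] K1 P PK.
have [-> | [a Pa]] := set_0Vmem P; first exact: occurs0.
have Ka := card_le1P K1 a (subsetP PK a Pa).
have -> : K :\: P = set0.
  by apply/setP => x; rewrite !inE Ka andbC inE; case: eqP => // ->; rewrite Pa.
have [g gC ag] := cover a; apply/exists_inP; exists g => //.
rewrite disjoints_subset sub0set andbT; apply/subsetP => x /(subsetP PK).
by rewrite Ka => /eqP ->.
Qed.

Lemma shatters_of_CF C K : (forall K', K' \proper K -> shatters C K') ->
  ~ (exists al be, [/\ [disjoint al & be], al :|: be = K & in_CF C (pmono al be)]) ->
  shatters C K.
Proof.
move=> sub_sh noCF P PK; have [// | nocc] := boolP (occurs C P (K :\: P)).
exfalso; apply: noCF.
have dP : [disjoint P & K :\: P].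
  by rewrite disjoints_subset; apply/subsetP => x xP; rewrite !inE xP.
have UP : P :|: K :\: P = K by rewrite -{1}(setIidPr PK) setID.
exists P, (K :\: P); split => //; apply: pmono_in_CF => // al' be' sal sbe.
rewrite UP => prop; have := sub_sh _ prop al' (subsetUl _ _).
rewrite setDUl setDv set0U (setDidPl _) //.
by rewrite disjoint_sym (disjointW sal sbe dP).
Qed.

Lemma G_edge_shatters C a b : standing_conventions C -> G_edge C a b ->
  shatters C [set a; b].
Proof.
move=> conv [_ noCF]; apply: shatters_of_CF noCF => K' K'ab.
apply: shatters_le1 conv _; rewrite -ltnS.
by apply: leq_trans (proper_card K'ab) _; rewrite cards2 ltnS leq_b1.
Qed.

Lemma G_clique_shatters_pairs C K : standing_conventions C -> G_clique C K ->
  {in K &, forall a b, shatters C [set a; b]}.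
Proof.
move=> conv clique a b aK bK; have [<- | ab] := eqVneq a b.
  by apply: shatters_le1 conv _; rewrite cards2 eqxx.
by apply: G_edge_shatters conv _; apply: clique => //; exact/eqP.
Qed.

Lemma shatters_code_del C K i : i \notin K -> shatters C K -> shatters (code_del C i) K.
Proof.
move=> iK sh P PK; have /exists_inP[g gC /andP[Pg dg]] := sh P PK.
apply/exists_inP; exists (g :\ i); first exact: imset_f.
rewrite subsetD1 Pg (contra (subsetP PK i) iK) /=.
exact: disjointWr (subsetDl g [set i]) dg.
Qed.

Lemma piercing_code_del_sub C i k : piercing C i k -> code_del C i \subset C.
Proof. by case=> s [t [_ _ _ _ EC]]; rewrite {2}EC subsetUl. Qed.

Section PiercingStep.
Variables (C : code n) (i : 'I_n) (s t : {set 'I_n}).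
Hypotheses (st : s \subset t) (it : i \notin t)
  (st_del : Defs.interval s t \subset code_del C i)
  (EC : C = code_del C i :|: Defs.interval (i |: s) (i |: t)).

Lemma pierced_codeword_bounds g : g \in C -> i \in g ->
  (i |: s \subset g) && (g \subset i |: t).
Proof.
rewrite {1}EC inE => /orP[/imsetP[h _ ->] | ]; first by rewrite setD11.
by rewrite inE.
Qed.

Lemma pierced_pair_bounds j : shatters C [set i; j] -> j != i -> (j \in t) && (j \notin s).
Proof.
move=> sh ji.
have /exists_inP[g gC /andP[ijg _]] := sh _ (subxx _).
have /exists_inP[g' g'C /andP[ig' dg']] := sh [set i] (subsetUl _ _).
rewrite sub1set in ig'; have /andP[/subsetP sg' _] := pierced_codeword_bounds g'C ig'.
have /andP[_ /subsetP gt] := pierced_codeword_bounds gC (subsetP ijg i (set21 i j)).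
move: (gt j (subsetP ijg j (set22 i j))); rewrite !inE (negbTE ji) /= => -> /=.
have jD : j \in [set i; j] :\: [set i] by rewrite !inE ji eqxx orbT.
by apply: contraFN (disjointFr dg' jD) => js; rewrite sg' // !inE js orbT.
Qed.

Lemma pierced_shatters K : i \in K -> {in K &, forall a b, shatters C [set a; b]} ->
  shatters C K.
Proof.
move=> iK pairs; have sub_del : code_del C i \subset C by rewrite {2}EC subsetUl.
have K_ts j : j \in K -> j != i -> (j \in t) && (j \notin s).
  by move=> jK; apply: pierced_pair_bounds; apply: pairs.
have Kt : K \subset i |: t.
  apply/subsetP => j jK; rewrite !inE; case: eqVneq => //= ji.
  by case/andP: (K_ts j jK ji).
have sK : [disjoint s & K].
  rewrite disjoint_sym disjoints_subset; apply/subsetP => j jK; rewrite inE.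
  have [-> | ji] := eqVneq j i; first exact: contra (subsetP st i) it.
  by case/andP: (K_ts j jK ji).
move=> P PK; apply/exists_inP; exists (s :|: P).
  have [iP | iP] := boolP (i \in P).
    rewrite EC !inE; apply/orP; right.
    by rewrite !subUset sub1set !inE iP orbT subsetUl (subset_trans st (subsetUr _ _))
      (subset_trans PK Kt).
  apply/(subsetP sub_del)/(subsetP st_del); rewrite inE subsetUl subUset st /=.
  apply/subsetP => x xP; move: (subsetP Kt x (subsetP PK x xP)); rewrite !inE.
  by case: eqP => [xi | //]; rewrite -xi xP in iP.
rewrite subsetUr disjoints_subset setCU subsetI -!disjoints_subset disjoint_sym.
rewrite (disjointWr (subsetDl K P) sK) /=.
by rewrite disjoints_subset; apply/subsetP => x; rewrite !inE => /andP[].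
Qed.

End PiercingStep.

Lemma k_ind_pierced_shatters k C K : k_ind_pierced k C ->
  {in K &, forall a b, shatters C [set a; b]} -> shatters C K.
Proof.
move=> kip; elim: kip K => [|{}C i k' _ pierced _ IH] K pairs.
  suff -> : K = set0 by apply: shatters0; rewrite inE.
  apply/setP => a; rewrite inE; apply/negP => aK.
  have /exists_inP[g] := pairs a a aK aK [set a; a] (subxx _).
  by rewrite inE => /eqP -> /andP[/subsetP/(_ a (set21 a a))]; rewrite inE.
have [iK | iK] := boolP (i \in K).
  case: pierced => s [t [st it _ st_del EC]].
  exact: (pierced_shatters st it st_del EC iK pairs).
apply: shattersS (piercing_code_del_sub pierced) _; apply: IH => a b aK bK.
apply: shatters_code_del (pairs a b aK bK).
by rewrite !inE; apply/norP; split; apply: contraNneq iK => ->.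
Qed.

End Shattering.

Section Balls.
Local Open Scope ring_scope.

Lemma affine_dependence (F : fieldType) m d (p : 'I_m -> 'rV[F]_d) : (d.+1 < m)%N ->
  exists2 w : 'I_m -> F, (exists j, w j != 0) & \sum_j w j = 0 /\ \sum_j w j *: p j = 0.
Proof.
move=> dm; pose M := row_mx (const_mx 1 : 'cV[F]_m) (\matrix_j p j).
have : kermx M != 0.
  by rewrite kermx_eq0 -row_leq_rank -ltnNge (leq_ltn_trans (rank_leq_col M)).
case/rowV0Pn => u /sub_kermxP; rewrite mul_mx_row -row_mx0 => /eq_row_mx[u1 up].
case/rV0Pn => j uj; exists (fun j => u 0 j); first by exists j.
split.
  have /(congr1 (fun A : 'M_1 => A 0 0)) := u1; rewrite !mxE => u1E.
  by apply: etrans u1E; apply: eq_bigr => i _; rewrite mxE mulr1.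
rewrite mulmx_sum_row in up; apply: etrans up.
by apply: eq_bigr => i _; rewrite rowK.
Qed.

Lemma sqdist_expand (R : realType) d (x y : 'rV[R]_d) :
  sqdist x y = sqdist x 0 - (\sum_l x 0 l * y 0 l) *+ 2 + sqdist 0 y.
Proof.
rewrite /sqdist -sumrMnl -sumrB -big_split /=; apply: eq_bigr => l _.
by rewrite !mxE subr0 sub0r sqrrN sqrrB.
Qed.

Lemma sqdist_affine_comb (R : realType) m d (w : 'I_m -> R) (p : 'I_m -> 'rV[R]_d) x :
  \sum_j w j = 0 -> \sum_j w j *: p j = 0 ->
  \sum_j w j * sqdist x (p j) = \sum_j w j * sqdist 0 (p j).
Proof.
move=> w0 wp0.
have cross : \sum_j w j * \sum_l x 0 l * p j 0 l = 0.
  under eq_bigr do rewrite mulr_sumr; rewrite exchange_big /=; apply: big1 => l _.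
  have wp0l : \sum_j w j * p j 0 l = 0.
    transitivity ((\sum_j w j *: p j) 0 l); last by rewrite wp0 mxE.
    by rewrite summxE; apply: eq_bigr => j _; rewrite mxE.
  by under eq_bigr do rewrite mulrCA; rewrite -mulr_sumr wp0l mulr0.
under eq_bigr do rewrite sqdist_expand mulrDr mulrBr mulrnAr.
by rewrite big_split sumrB /= -mulr_suml w0 mul0r sub0r sumrMnl cross mul0rn oppr0 add0r.
Qed.

Lemma weighted_sum_lt0 (R : realDomainType) m (w F : 'I_m -> R) :
  \sum_j w j = 0 -> (exists j, w j != 0) -> (forall j, (F j < 0) = (0 < w j)) ->
  \sum_j w j * F j < 0.
Proof.
move=> w0 [j0 wj0] FE.
have [/existsP[j wj] | /existsPn wle0] := boolP [exists j, 0 < w j]; last first.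
  have le0 i : true -> 0 <= - w i by rewrite oppr_ge0 leNgt wle0.
  have /(psumr_eq0P le0)/(_ j0 isT)/eqP : \sum_(i | true) - w i = 0 by rewrite sumrN w0 oppr0.
  by rewrite oppr_eq0 (negbTE wj0).
have term_le0 i : w i * F i <= 0.
  have [wi | wi] := ltP 0 (w i); first by rewrite ltW // pmulr_rlt0 // FE.
  by rewrite mulr_le0_ge0 // leNgt FE ltNge wi.
have term_lt0 : w j * F j < 0 by rewrite pmulr_rlt0 // FE.
rewrite (bigD1 j) //=.
by have := ltr_leD term_lt0 (sumr_le0 _ (fun i _ => term_le0 i)); rewrite addr0.
Qed.

Lemma balls_not_all_patterns (R : realType) m d (p : 'I_m -> 'rV[R]_d) (rad : 'I_m -> R) :
  (d.+1 < m)%N ->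
  ~ (forall s : 'I_m -> bool, exists x, forall j, (sqdist x (p j) < rad j ^+ 2) = s j).
Proof.
move=> dm all_patterns; have [w nz [w0 wp0]] := affine_dependence p dm.
pose pow x j := sqdist x (p j) - rad j ^+ 2.
have powE x : \sum_j w j * pow x j = \sum_j w j * pow 0 j.
  rewrite /pow; under eq_bigr do rewrite mulrBr; under [RHS]eq_bigr do rewrite mulrBr.
  by rewrite !sumrB (sqdist_affine_comb x w0 wp0).
have pattern (v : 'I_m -> R) : exists x, forall j, (pow x j < 0) = (0 < v j).
  by have [x Hx] := all_patterns (fun j => 0 < v j); exists x => j; rewrite subr_lt0 Hx.
have [x1 H1] := pattern w; have [x2 H2] := pattern (fun j => - w j).
have := weighted_sum_lt0 w0 nz H1; rewrite powE.
have : \sum_j - w j * pow x2 j < 0.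
  apply: weighted_sum_lt0 H2; first by rewrite sumrN w0 oppr0.
  by case: nz => j wj; exists j; rewrite oppr_eq0.
under eq_bigr do rewrite mulNr; rewrite sumrN oppr_lt0 powE => gt0 lt0.
by have := lt_trans gt0 lt0; rewrite ltxx.
Qed.

Lemma balls_realize_not_shatters (R : realType) d n (C : code n)
    (c : 'I_n -> 'rV[R]_d) (r : 'I_n -> R) (K : {set 'I_n}) :
  balls_realize C c r -> (d.+1 < #|K|)%N -> ~ shatters C K.
Proof.
move=> real dK sh; apply: (balls_not_all_patterns (p := c \o enum_val) (rad := r \o enum_val) dK).
move=> s; pose P := [set enum_val j | j in [set j | s j]].
have PK : P \subset K by apply/subsetP => _ /imsetP[j _ ->]; exact: enum_valP.
have /exists_inP[g gC /andP[Pg dg]] := sh P PK.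
have [x [x_in x_out]] := (real g).1 gC; exists x => j /=.
have -> : s j = (enum_val j \in g).
  have [sj | sj] := boolP (s j).
    by apply/esym/(subsetP Pg)/imsetP; exists j; rewrite ?inE.
  apply/esym/(disjointFr dg); rewrite inE enum_valP andbT.
  by rewrite mem_imset ?inE //; exact: enum_val_inj.
have [ejg | ejg] := boolP (enum_val j \in g); first exact: x_in.
by apply/negP/x_out.
Qed.

End Balls.

Theorem lemma3p7 (R : realType) (n k : nat) (C : code n) :
  standing_conventions C ->
  ind_pierced C ->
  (1 <= k)%N ->
  (exists K : {set 'I_n}, #|K| = k.+1 /\ G_clique C K) ->
  ~ has_wf_ball_realization R k.-1 C.
Proof.
move=> conv [k' pierced] k_ge1 [K [cardK clique]] [c [r [_ real _]]].
apply: (balls_realize_not_shatters (K := K) real); first by rewrite cardK prednK.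
exact: k_ind_pierced_shatters pierced (G_clique_shatters_pairs conv clique).
Qed.
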